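(* Let $\Lambda\in\mathcal H_I$ and let $W$ be a nonempty class of capacities on $(\Omega,\mathcal F)$. Define $\overline w(A)=\sup_{w\in W}w(A)$ and $\underline w(A)=\inf_{w\in W}w(A)$ for $A\in\mathcal F$ (these are capacities). Then for all $X\in\mathcal X$, $$\sup_{w\in W}\Lambda\mathrm{VaR}^{w}(X)=\Lambda\mathrm{VaR}^{\overline w}(X)\quad\text{and}\quad \inf_{w\in W}\Lambda\mathrm{VaR}^{+,w}(X)=\Lambda\mathrm{VaR}^{+,\underline w}(X).$$ In particular, for a nonempty class $\mathcal P$ of probability measures on $(\Omega,\mathcal F)$, $\sup_{\mathbb Q\in\mathcal P}\Lambda\mathrm{VaR}^{\mathbb Q}=\Lambda\mathrm{VaR}^{\overline{\mathbb Q}}$ and $\inf_{\mathbb Q\in\mathcal P}\Lambda\mathrm{VaR}^{+,\mathbb Q}=\Lambda\mathrm{VaR}^{+,\underline{\mathbb Q}}$ with $\overline{\mathbb Q}=\sup_{\mathbb Q\in\mathcal P}\mathbb Q$, $\underline{\mathbb Q}=\inf_{\mathbb Q\in\mathcal P}\mathbb Q$.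
   Context: Let $(\Omega,\mathcal F)$ be a measurable space and $\mathcal X$ a set of real-valued random variables on it containing all bounded ones. A map $w:\mathcal F\to[0,1]$ is a capacity if $w(\emptyset)=0$, $w(\Omega)=1$ and $A\subseteq B$ implies $w(A)\le w(B)$. For $\Lambda:\mathbb R\to[0,1]$ and a capacity $w$: $\Lambda\mathrm{VaR}^w(X)=\inf\{x\in\mathbb R: w(X>x)\le\Lambda(x)\}$, $\Lambda\mathrm{VaR}^{+,w}(X)=\sup\{x\in\mathbb R: w(X>x)\ge\Lambda(x)\}$, with $\inf\emptyset=\infty$, $\sup\emptyset=-\infty$. $\mathcal H_I$ is the set of all (non-strictly) increasing functions $\Lambda:\mathbb R\to(0,1)$. *)

From HB Require Import structures.
From mathcomp Require Import all_boot all_order all_algebra.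
From mathcomp Require Import all_classical all_reals all_analysis.
Set Implicit Arguments. Unset Strict Implicit. Unset Printing Implicit Defensive.
Import Order.TTheory GRing.Theory Num.Theory.
Local Open Scope classical_set_scope.
Local Open Scope ring_scope.

Definition capacity (d : measure_display) (T : measurableType d) (R : realType)
  (w : set T -> R) : Prop :=
  [/\ w set0 = 0, w setT = 1,
      (forall A, measurable A -> 0 <= w A <= 1) &
      (forall A B, measurable A -> measurable B -> A `<=` B -> w A <= w B)].

Definition LVaR (d : measure_display) (T : measurableType d) (R : realType)
  (Lam : R -> R) (w : set T -> R) (X : T -> R) : \bar R :=
  ereal_inf [set x%:E | x in [set x : R | w [set t | x < X t] <= Lam x]].

Definition LVaRp (d : measure_display) (T : measurableType d) (R : realType)
  (Lam : R -> R) (w : set T -> R) (X : T -> R) : \bar R :=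
  ereal_sup [set x%:E | x in [set x : R | Lam x <= w [set t | x < X t]]].

Definition wsup (T : Type) (R : realType) (W : set (set T -> R)) : set T -> R :=
  fun A => sup [set w A | w in W].
Definition winf (T : Type) (R : realType) (W : set (set T -> R)) : set T -> R :=
  fun A => inf [set w A | w in W].

Definition in_HI (R : realType) (Lam : R -> R) : Prop :=
  (forall x y, x <= y -> Lam x <= Lam y) /\ (forall x, 0 < Lam x < 1).

From HB Require Import structures.
From mathcomp Require Import all_boot all_order all_algebra.
From mathcomp Require Import all_classical all_reals all_analysis.
Import Order.TTheory GRing.Theory Num.Theory.
Local Open Scope classical_set_scope.
Local Open Scope ring_scope.

(* For nondecreasing Lam, the acceptance sets {x | w(X > x) <= Lam x} are
   upward closed, since x |-> w(X > x) is nonincreasing; the acceptance set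
   of sup_W w is their intersection over W. For upward closed subsets of R,
   the infimum of the intersection is the supremum of the infima, which is the
   first identity. The second one is dual, with downward closed sets
   {x | Lam x <= w(X > x)} and inf_W w. *)

Lemma lee_ltEFin (R : realType) (x y : \bar R) :
  (forall r : R, (y < r%:E)%E -> (x <= r%:E)%E) -> (x <= y)%E.
Proof.
case: y => [s | | ] xle; last 2 first.
- exact: leey.
- case: x xle => [r | | ] xle //.
  + by have := xle (r - 1) (ltNyr _); rewrite lee_fin lerBrDr gerDl ler10.
  + by have := xle 0 (ltNyr _).
apply/lee_addgt0Pr => e e0; apply: xle.
by rewrite lte_fin ltrDl.
Qed.

Lemma lee_gtEFin (R : realType) (x y : \bar R) :
  (forall r : R, (r%:E < x)%E -> (r%:E <= y)%E) -> (x <= y)%E.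
Proof.
move=> xle; rewrite -leeN2; apply: lee_ltEFin => r.
rewrite -{1}(oppeK r%:E) lteN2 -{2}(oppeK r%:E) leeN2 => /xle.
by rewrite -leeN2.
Qed.

Lemma ereal_inf_bigcap (R : realType) (I : Type) (J : set I) (F : I -> set R) :
  (forall i, J i -> forall x y, x <= y -> F i x -> F i y) ->
  ereal_inf (EFin @` \bigcap_(i in J) F i)
  = ereal_sup [set ereal_inf (EFin @` F i) | i in J].
Proof.
move=> Fup; apply/eqP; rewrite eq_le; apply/andP; split; last first.
  apply: ge_ereal_sup => _ [i Ji <-]; apply: ereal_inf_le_tmp.
  by apply: image_subset => x /(_ i Ji).
apply: lee_ltEFin => r supr; apply: ereal_inf_lbound; exists r => // i Ji.
have : (ereal_inf (EFin @` F i) < r%:E)%E.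
  by apply: le_lt_trans supr; apply: ereal_sup_ubound; exists i.
case/ereal_inf_lt => _ [x Fx <-]; rewrite lte_fin => /ltW xr.
exact: Fup xr Fx.
Qed.

Lemma ereal_sup_bigcap (R : realType) (I : Type) (J : set I) (F : I -> set R) :
  (forall i, J i -> forall x y, x <= y -> F i y -> F i x) ->
  ereal_sup (EFin @` \bigcap_(i in J) F i)
  = ereal_inf [set ereal_sup (EFin @` F i) | i in J].
Proof.
move=> Fdown; apply/eqP; rewrite eq_le; apply/andP; split.
  apply: le_ereal_inf_tmp => _ [i Ji <-]; apply: ereal_sup_le.
  by apply: image_subset => x /(_ i Ji).
apply: lee_gtEFin => r rinf; apply: ereal_sup_ubound; exists r => // i Ji.
have : (r%:E < ereal_sup (EFin @` F i))%E.
  by apply: lt_le_trans rinf _; apply: ereal_inf_lbound; exists i.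
case/ereal_sup_gt => _ [x Fx <-]; rewrite lte_fin => /ltW rx.
exact: Fdown rx Fx.
Qed.

Section capacity_class.
Context (d : measure_display) (T : measurableType d) (R : realType).
Implicit Types (w : set T -> R) (W : set (set T -> R)) (X : T -> R).

Lemma measurable_gt_level X x :
  measurable_fun setT X -> measurable [set t | x < X t].
Proof.
move=> mX; rewrite -preimage_itvoy -[X @^-1` _]setTI.
exact: mX (measurable_itv _).
Qed.

Lemma capacity_gt_level_nonincr w X x y :
  capacity w -> measurable_fun setT X -> x <= y ->
  w [set t | y < X t] <= w [set t | x < X t].
Proof.
move=> [_ _ _ wmono] mX xy; apply: wmono; try exact: measurable_gt_level.
by move=> t /= /(le_lt_trans xy).
Qed.

Section nonempty_class.
Variable W : set (set T -> R).
Hypotheses (W0 : W !=set0) (Wcap : forall w, W w -> capacity w).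

Let image_class_neq0 A : [set w A | w in W] !=set0.
Proof. by case: W0 => w Ww; exists (w A), w. Qed.

Lemma wsup_le A c :
  measurable A -> wsup W A <= c <-> forall w, W w -> w A <= c.
Proof.
move=> mA; split => [supc w Ww | lec].
  apply: le_trans supc; apply: sup_upper_bound; last by exists w.
  split => //; exists 1 => _ [v Wv <-].
  by have [_ _ /(_ A mA)/andP[] _] := Wcap _ Wv.
by apply: ge_sup => // _ [w Ww <-]; exact: lec.
Qed.

Lemma winf_ge A c :
  measurable A -> c <= winf W A <-> forall w, W w -> c <= w A.
Proof.
move=> mA; split => [cinf w Ww | gec].
  apply: le_trans cinf _; apply: ge_inf; last by exists w.
  exists 0 => _ [v Wv <-].
  by have [_ _ /(_ A mA)/andP[]] := Wcap _ Wv.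
by apply: lb_le_inf => // _ [w Ww <-]; exact: gec.
Qed.

Variables (Lam : R -> R) (X : T -> R).
Hypotheses (Lam_nd : {homo Lam : x y / x <= y}) (mX : measurable_fun setT X).

Lemma LVaR_wsup : ereal_sup [set LVaR Lam w X | w in W] = LVaR Lam (wsup W) X.
Proof.
rewrite /LVaR -ereal_inf_bigcap; last first.
  move=> w Ww x y xy /= wx; apply: le_trans (le_trans wx (Lam_nd _ _ xy)).
  exact: capacity_gt_level_nonincr (Wcap _ Ww) mX xy.
congr (ereal_inf (EFin @` _)); apply/seteqP; split => x /=.
  by move=> lex; apply/wsup_le => //; exact: measurable_gt_level.
by move/wsup_le; apply; exact: measurable_gt_level.
Qed.

Lemma LVaRp_winf : ereal_inf [set LVaRp Lam w X | w in W] = LVaRp Lam (winf W) X.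
Proof.
rewrite /LVaRp -ereal_sup_bigcap; last first.
  move=> w Ww x y xy /= wy; apply: le_trans (le_trans (Lam_nd _ _ xy) wy) _.
  exact: capacity_gt_level_nonincr (Wcap _ Ww) mX xy.
congr (ereal_sup (EFin @` _)); apply/seteqP; split => x /=.
  by move=> gex; apply/winf_ge => //; exact: measurable_gt_level.
by move/winf_ge; apply; exact: measurable_gt_level.
Qed.

End nonempty_class.

Lemma capacity_probability (Q : probability T R) : capacity (fun A => fine (Q A)).
Proof.
split => /=.
- by rewrite measure0.
- by rewrite probability_setT.
- move=> A mA; rewrite fine_ge0 ?measure_ge0//=.
  by rewrite -lee_fin fineK ?fin_num_measure// probability_le1.
- move=> A B mA mB AB; rewrite -lee_fin !fineK ?fin_num_measure//.
  by apply: le_measure => //; rewrite inE.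
Qed.

End capacity_class.

Theorem mainTheorem2 (d : measure_display) (T : measurableType d) (R : realType)
  (Lam : R -> R) : in_HI Lam ->
  (forall (W : set (set T -> R)), W !=set0 -> (forall w, W w -> capacity w) ->
     forall X : T -> R, measurable_fun setT X ->
       ereal_sup [set LVaR Lam w X | w in W] = LVaR Lam (wsup W) X /\
       ereal_inf [set LVaRp Lam w X | w in W] = LVaRp Lam (winf W) X) /\
  (forall (P : set (probability T R)), P !=set0 ->
     forall X : T -> R, measurable_fun setT X ->
       let W := [set (fun A => fine (Q A)) | Q in P] in
       ereal_sup [set LVaR Lam (fun A => fine (Q A)) X | Q in P]
         = LVaR Lam (wsup W) X /\
       ereal_inf [set LVaRp Lam (fun A => fine (Q A)) X | Q in P]
         = LVaRp Lam (winf W) X).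
Proof.
move=> [Lam_nd _]; split=> [W W0 Wcap X mX | P [Q PQ] X mX W].
  by split; [exact: LVaR_wsup | exact: LVaRp_winf].
have W0 : W !=set0 by exists (fun A => fine (Q A)), Q.
have Wcap w : W w -> capacity w by move=> [Q' _ <-]; exact: capacity_probability.
rewrite -(image_comp _ (fun w => LVaR Lam w X)) -(image_comp _ (fun w => LVaRp Lam w X)).
by split; [exact: LVaR_wsup | exact: LVaRp_winf].
Qed.
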